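(* Let $p$ be prime, $G=\mathbb{Z}_{p^2}\times\mathbb{Z}_p$, $c\in\mathbb{Z}_p$, and let $y_{ij},z_{ij}\in\mathbb{Z}_p$ ($0\le i,j\le p-1$) satisfy $y_{ij}+cz_{ij}\equiv j\pmod p$. Then the set $B=\{(i+py_{ij},z_{ij}):0\le i,j\le p-1\}\subset G$ is a tile of $G$ and also a spectral set.
   Context: Elements of $\mathbb{Z}_p$ are represented by $\{0,\dots,p-1\}$ and $i+py_{ij}$ is read in $\mathbb{Z}_{p^2}$. For $b=(b_1,b_2)\in G$ let $\chi_b(a_1,a_2)=e^{2\pi i(a_1b_1/p^2+a_2b_2/p)}$. $B$ is a spectral set if there is $\Lambda\subset G$ with $\{\chi_\lambda|_B:\lambda\in\Lambda\}$ an orthogonal basis of $L^2(B)$ (counting measure). $B$ is a tile if there is $T\subset G$ with $B\oplus T=G$ (every element of $G$ uniquely $b+t$, $b\in B,t\in T$). *)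

From HB Require Import structures.
From mathcomp Require Import all_boot all_order all_algebra all_field.
Set Implicit Arguments. Unset Strict Implicit. Unset Printing Implicit Defensive.
Import Order.TTheory GRing.Theory Num.Theory.
Local Open Scope ring_scope.

(* e^{2 pi i / n} in algC: n.-root (-1) is e^{i pi / n} (minimal nonnegative argument). *)
Definition eC (n : nat) : algC := (n.-root (-1)) ^+ 2.

Definition Gp (p : nat) : finType := ('Z_(p ^ 2) * 'Z_p)%type.

(* chi_b(a) = exp(2 pi i (a1 b1 / p^2 + a2 b2 / p)) = e(p^2)^(a1 b1 + p a2 b2). *)
Definition chi (p : nat) (b a : Gp p) : algC :=
  eC (p ^ 2) ^+ ((a.1 : nat) * (b.1 : nat) + p * ((a.2 : nat) * (b.2 : nat)))%N.

Definition is_tile (p : nat) (B : {set Gp p}) : Prop :=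
  exists T : {set Gp p}, forall g : Gp p,
    exists! bt : Gp p * Gp p, [/\ bt.1 \in B, bt.2 \in T & g = bt.1 + bt.2].

(* B is spectral: there is Lambda with {chi_l|_B : l in Lambda} an orthogonal
   basis of L^2(B) (counting measure): pairwise orthogonal (distinct l),
   linearly independent, and spanning all functions on B. *)
Definition is_spectral (p : nat) (B : {set Gp p}) : Prop :=
  exists L : {set Gp p},
    [/\ (forall l l', l \in L -> l' \in L -> l != l' ->
           \sum_(b in B) chi l b * (chi l' b)^* = 0),
        (forall a : Gp p -> algC,
           (forall b, b \in B -> \sum_(l in L) a l * chi l b = 0) ->
           forall l, l \in L -> a l = 0)
      & (forall f : Gp p -> algC, exists a : Gp p -> algC,
           forall b, b \in B -> f b = \sum_(l in L) a l * chi l b)].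

Definition Bset (p : nat) (y z : 'I_p -> 'I_p -> 'Z_p) : {set Gp p} :=
  [set ((((i : nat) + p * (y i j : nat))%N)%:R : 'Z_(p ^ 2), z i j)
     | i : 'I_p, j : 'I_p].

From HB Require Import structures.
From mathcomp Require Import all_boot all_order all_algebra all_field.
From mathcomp Require Import ring lra zify.
Import Order.TTheory GRing.Theory Num.Theory.
Set Implicit Arguments. Unset Strict Implicit. Unset Printing Implicit Defensive.
Local Open Scope ring_scope.

(* With T = {(-p c k, k) : k in Z_p}, the sum map B x T -> G is
   injective (the first coordinate recovers i and y_ij - c k, the second
   z_ij + k, and the relation y + c z = j then recovers j and k); since
   |B| |T| = p^3 = |G| it is onto, hence B (+) T = G.

   With Lambda = {(r + p s, c r)}, the characters evaluate to
   chi_(r,s)(i,j) = w^(r i) (w^p)^(r j + s i) for w = e^(2 pi i / p^2); this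
   kernel is symmetric in (r,s) <-> (i,j) and its rows are orthogonal by the
   orthogonality of p-th roots of unity.  Orthogonal rows and columns of a
   nonsingular "Fourier matrix" give an orthogonal basis of L^2(B). *)

Section FourierBasis.
Variables (T : finType) (k : T -> T -> algC) (B L : {set T}) (m n : algC).
Hypotheses (m_neq0 : m != 0) (n_neq0 : n != 0).
Hypothesis rows_orth : {in L &, forall l l',
  \sum_(b in B) k l b * (k l' b)^* = if l == l' then m else 0}.
Hypothesis cols_orth : {in B &, forall b b',
  \sum_(l in L) k l b * (k l b')^* = if b == b' then n else 0}.

(* Pairing a vanishing combination with k l0 isolates the coefficient of l0. *)
Lemma fourier_independent (a : T -> algC) :
  (forall b, b \in B -> \sum_(l in L) a l * k l b = 0) -> forall l, l \in L -> a l = 0.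
Proof.
move=> a_rel l0 l0L; apply: (mulIf m_neq0); rewrite mul0r.
have coef l : l \in L ->
    \sum_(b in B) a l * k l b * (k l0 b)^* = if l == l0 then a l * m else 0.
  move=> lL; under eq_bigr do rewrite -mulrA.
  by rewrite -mulr_sumr rows_orth //; case: eqP; rewrite ?mulr0.
have <- : \sum_(b in B) (\sum_(l in L) a l * k l b) * (k l0 b)^* = 0.
  by apply: big1 => b bB; rewrite a_rel // mul0r.
under eq_bigr do rewrite mulr_suml.
rewrite exchange_big /= (bigD1 l0) //= coef // eqxx big1 ?addr0 // => l /andP[lL l_neq].
by rewrite coef // (negPf l_neq).
Qed.

(* Column orthogonality gives the explicit inversion formula
   f = sum_l (<f, k l> / n) k l on B. *)
Lemma fourier_spanning (f : T -> algC) :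
  exists a : T -> algC, forall b, b \in B -> f b = \sum_(l in L) a l * k l b.
Proof.
exists (fun l => (\sum_(b' in B) f b' * (k l b')^*) / n) => b bB.
have coef b' : b' \in B ->
    \sum_(l in L) f b' / n * (k l b * (k l b')^*) = if b == b' then f b' else 0.
  move=> b'B; rewrite -mulr_sumr cols_orth //.
  by case: eqP; rewrite ?mulr0 // mulfVK.
symmetry; rewrite (eq_bigr (fun l => \sum_(b' in B) f b' / n * (k l b * (k l b')^*))).
  rewrite exchange_big /= (bigD1 b) //= coef // eqxx big1 ?addr0 // => b' /andP[b'B b'_neq].
  by rewrite coef // eq_sym (negPf b'_neq).
by move=> l _; rewrite !mulr_suml; apply: eq_bigr => b' _; ring.
Qed.
End FourierBasis.

Lemma tiling_of_injective_sum (T : finType) (op : T -> T -> T) (A S : {set T}) :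
  {in setX A S &, injective (fun bt => op bt.1 bt.2)} -> (#|A| * #|S| = #|T|)%N ->
  forall g, exists! bt : T * T, [/\ bt.1 \in A, bt.2 \in S & g = op bt.1 bt.2].
Proof.
move=> op_inj card_AS g.
have im_full : [set op bt.1 bt.2 | bt in setX A S] = [set: T].
  by apply/eqP; rewrite eqEcard subsetT cardsT (card_in_imset op_inj) cardsX card_AS leqnn.
have /imsetP[[b t] btAS g_def] : g \in [set op bt.1 bt.2 | bt in setX A S].
  by rewrite im_full inE.
have /setXP[bA tS] := btAS.
exists (b, t); split=> // -[b' t'] [/= b'A t'S g'_def]; apply: op_inj => //.
  exact/setXP.
by rewrite -g_def -g'_def.
Qed.

Lemma unit_coord_le (R : realFieldType) (a1 a2 b1 b2 : R) :
  a1 ^+ 2 + a2 ^+ 2 = 1 -> b1 ^+ 2 + b2 ^+ 2 = 1 -> 0 <= a2 -> 0 <= b2 ->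
  b1 <= a1 -> 0 <= b1 -> a2 <= b2.
Proof.
move=> ha hb ha2 hb2 hab hb1.
by rewrite -(ler_pXn2r (n := 2)) ?nnegrE //; nra.
Qed.

(* If b is further from 1 than a, then b a^* still lies in the upper half-plane
   (its imaginary part is this cross product). *)
Lemma unit_cross_ge0 (R : realFieldType) (a1 a2 b1 b2 : R) :
  a1 ^+ 2 + a2 ^+ 2 = 1 -> b1 ^+ 2 + b2 ^+ 2 = 1 -> 0 <= a2 -> 0 <= b2 ->
  b1 <= a1 -> 0 <= a1 * b2 - b1 * a2.
Proof.
move=> ha hb ha2 hb2 hab.
have [hb1|hb1] := lerP 0 b1.
  have := unit_coord_le ha hb ha2 hb2 hab hb1; nra.
have [ha1|ha1] := lerP 0 a1; first nra.
have hba : - a1 <= - b1 by rewrite lerN2.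
have hna1 : 0 <= - a1 by rewrite oppr_ge0 ltW.
have := unit_coord_le (a1 := - b1) (b1 := - a1) _ _ hb2 ha2 hba hna1; nra.
Qed.

(* ... and rotating b backwards by a /= 1 strictly increases its real part
   (the real part of b a^* is this dot product). *)
Lemma unit_dot_gt (R : realFieldType) (a1 a2 b1 b2 : R) :
  a1 ^+ 2 + a2 ^+ 2 = 1 -> b1 ^+ 2 + b2 ^+ 2 = 1 -> 0 <= a2 -> 0 <= b2 ->
  b1 <= a1 -> a1 != 1 -> b1 < a1 * b1 + a2 * b2.
Proof.
move=> ha hb ha2 hb2 hab ha1.
have {ha1} ha1 : a1 < 1 by rewrite lt_neqAle ha1 /=; nra.
have [hb1|hb1] := ltrP b1 0; first nra.
have := unit_coord_le ha hb ha2 hb2 hab hb1; nra.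
Qed.

Lemma rotate_unit (a b : algC) :
  `|a| = 1 -> `|b| = 1 -> 0 <= 'Im a -> 0 <= 'Im b -> 'Re b <= 'Re a ->
  0 <= 'Im (b * a^*) /\ (a != 1 -> 'Re b < 'Re (b * a^*)).
Proof.
pose re x : algR := in_algR (Creal_Re x); pose im x : algR := in_algR (Creal_Im x).
have circle x : `|x| = 1 -> re x ^+ 2 + im x ^+ 2 = 1.
  by move=> hx; apply: val_inj; rewrite rmorphD !rmorphXn /= -normC2_Re_Im hx expr1n.
move=> /circle ha /circle hb ha2 hb2 hab.
rewrite ImM ReM Re_conj Im_conj mulrN; split.
  have := unit_cross_ge0 ha hb ha2 hb2 hab.
  by rewrite -[(_ <= _)%R]/(algRval _ <= algRval _) /= addrC.
move=> a_ne1; have re_a_ne1 : re a != 1.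
  apply: contra a_ne1 => /eqP re_a1.
  have /eqP : im a ^+ 2 = 0 by move: ha; rewrite re_a1 expr1n -{2}(addr0 1) => /addrI.
  rewrite sqrf_eq0 => /eqP/(congr1 val) /= im_a0.
  by move/(congr1 val): re_a1 => /= re_a1; rewrite [a]Crect im_a0 re_a1 mulr0 addr0.
have := unit_dot_gt ha hb ha2 hb2 hab re_a_ne1.
by rewrite -[(_ < _)%R]/(algRval _ < algRval _) /= (mulrC ('Re b)) (mulrC ('Im b)) mulNr opprK.
Qed.

Lemma root1_norm (z : algC) (M : nat) : (0 < M)%N -> z ^+ M = 1 -> `|z| = 1.
Proof.
move=> M_gt0 zM; apply/eqP; rewrite -(pexpr_eq1 M_gt0) ?normr_ge0 //.
by rewrite -normrX zM normr1.
Qed.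

Lemma norm1_mul_conj (z : algC) : `|z| = 1 -> z * z^* = 1.
Proof. by move=> z1; rewrite -normCK z1 expr1n. Qed.

Lemma root1_conj (z : algC) (M : nat) : (0 < M)%N -> z ^+ M = 1 -> z^* = z ^+ M.-1.
Proof.
move=> M_gt0 zM; have z_neq0 : z != 0.
  by apply: contra_eq_neq zM => ->; rewrite expr0n gtn_eqF // eq_sym oner_neq0.
apply: (mulfI z_neq0); rewrite norm1_mul_conj ?(root1_norm M_gt0 zM) //.
by rewrite -exprS prednK.
Qed.

(* Let eta be the M-th root of unity /= 1 of the closed upper half-plane with
   the largest real part.  Rotating any such root w by eta^-1 keeps it in the
   upper half-plane and strictly decreases the number of M-th roots whose real
   part exceeds Re w; by descent every M-th root is a power of eta, so eta is
   a primitive M-th root.  (xi, a primitive root, just enumerates the roots.) *)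
Section MaxUpperRoot.
Variables (M : nat) (xi : algC).
Hypotheses (M_gt1 : (1 < M)%N) (xi_prim : M.-primitive_root xi).
Let M_gt0 : (0 < M)%N := ltnW M_gt1.

(* Such an eta exists: xi or its conjugate is a candidate, and there are
   finitely many M-th roots. *)
Lemma max_upper_root_exists : exists eta : algC,
  [/\ eta ^+ M = 1, 0 <= 'Im eta, eta != 1 &
      forall w, w ^+ M = 1 -> 0 <= 'Im w -> w != 1 -> 'Re w <= 'Re eta].
Proof.
pose ok (k : 'I_M) := (0 <= 'Im (xi ^+ k)) && (xi ^+ k != 1).
have xi_neq1 k : (0 < k < M)%N -> xi ^+ k != 1.
  move=> /andP[k_gt0 k_ltM]; rewrite -(expr0 xi) (eq_prim_root_expr xi_prim).
  by rewrite mod0n modn_small // -lt0n.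
have [k0 ok_k0] : exists k0, ok k0.
  have [Im_ge0|Im_lt0] := real_ge0P (Creal_Im xi).
    by exists (Ordinal M_gt1); rewrite /ok expr1 Im_ge0 -[xi]expr1 xi_neq1 ?M_gt1.
  have M1_ltM : (M.-1 < M)%N by rewrite prednK.
  exists (Ordinal M1_ltM); rewrite /ok /= -(root1_conj M_gt0 (prim_expr_order xi_prim)).
  by rewrite Im_conj oppr_ge0 ltW //= fmorph_eq1 -[xi]expr1 xi_neq1 ?M_gt1.
pose re x : algR := in_algR (Creal_Re x).
have [k ok_k k_max] := arg_maxP (fun k : 'I_M => re (xi ^+ k)) ok_k0.
case/andP: ok_k => Im_ge0 neq1; exists (xi ^+ k); split => //.
  by rewrite exprAC (prim_expr_order xi_prim) expr1n.
move=> w wM Im_w w_neq1; have [i w_def] := prim_rootP xi_prim wM.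
by rewrite w_def; apply: (k_max i); rewrite /ok -w_def Im_w w_neq1.
Qed.

Variable eta : algC.
Hypotheses (etaM : eta ^+ M = 1) (Im_eta : 0 <= 'Im eta) (eta_neq1 : eta != 1).
Hypothesis eta_max : forall w, w ^+ M = 1 -> 0 <= 'Im w -> w != 1 -> 'Re w <= 'Re eta.

(* The descent measure: number of M-th roots of unity to the right of w. *)
Let above (w : algC) := #|[set k : 'I_M | 'Re w < 'Re (xi ^+ k)]|.

Lemma rotate_back w : w ^+ M = 1 -> 0 <= 'Im w -> w != 1 ->
  [/\ (w * eta^*) ^+ M = 1, 0 <= 'Im (w * eta^*) & (above (w * eta^*)%R < above w)%N].
Proof.
move=> wM Im_w w_neq1.
have [Im_ge0 Re_gt] := rotate_unit (root1_norm M_gt0 etaM) (root1_norm M_gt0 wM)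
  Im_eta Im_w (eta_max wM Im_w w_neq1).
have w'M : (w * eta^*) ^+ M = 1 by rewrite exprMn -rmorphXn etaM rmorph1 wM mulr1.
split => //; apply: proper_card; apply/properP; split.
  by apply/subsetP => k; rewrite !inE; apply: lt_trans (Re_gt eta_neq1).
have [k w'_def] := prim_rootP xi_prim w'M.
by exists k; rewrite !inE -w'_def ?ltxx // Re_gt.
Qed.

Lemma upper_root_power w : w ^+ M = 1 -> 0 <= 'Im w -> exists j, w = eta ^+ j.
Proof.
have [n] := ubnP (above w); elim: n w => // n IHn w above_w wM Im_w.
have [->|w_neq1] := eqVneq w 1; first by exists 0%N.
have [w'M Im_w' above_w'] := rotate_back wM Im_w w_neq1.
have [j w'_def] := IHn _ (leq_trans above_w' above_w) w'M Im_w'.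
exists j.+1; rewrite exprSr -w'_def -mulrA [eta^* * _]mulrC.
by rewrite norm1_mul_conj ?mulr1 // (root1_norm M_gt0 etaM).
Qed.

(* Lower roots are conjugates of upper ones, and conj eta = eta^(M-1). *)
Lemma root_power w : w ^+ M = 1 -> exists j, w = eta ^+ j.
Proof.
move=> wM; have [Im_ge0|Im_lt0] := real_ge0P (Creal_Im w).
  exact: upper_root_power.
have [j wc_def] : exists j, w^* = eta ^+ j.
  apply: upper_root_power; first by rewrite -rmorphXn wM rmorph1.
  by rewrite Im_conj oppr_ge0 ltW.
exists (M.-1 * j)%N.
by rewrite -[w]conjCK wc_def mulnC exprM (root1_conj M_gt0) // exprAC etaM expr1n.
Qed.

Lemma max_upper_root_prim : M.-primitive_root eta.
Proof.
have [m xi_def] := root_power (prim_expr_order xi_prim).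
have [d d_prim d_dvdM] := prim_order_exists M_gt0 etaM.
have M_dvd_d : (M %| d)%N.
  by rewrite (prim_order_dvd xi_prim) xi_def exprAC (prim_expr_order d_prim) expr1n.
by have /eqP <- : d == M by rewrite eqn_dvd d_dvdM M_dvd_d.
Qed.
End MaxUpperRoot.

(* N.-root (-1) is a primitive 2N-th root: it maximizes the real part among
   the N-th roots of -1 in the upper half-plane (rootC_Re_max), and so does the
   root eta of the section above (with M = 2N), because eta ^+ N = -1. *)
Lemma rootC_neg1_prim N : (1 < N)%N -> (2 * N).-primitive_root (N.-root (-1) : algC).
Proof.
move=> N_gt1; have N_gt0 := ltnW N_gt1; set M := (2 * N)%N; set rho := N.-root _.
have M_gt1 : (1 < M)%N by rewrite (leq_trans N_gt1) // leq_pmull.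
have [xi xi_prim] := C_prim_root_exists (ltnW M_gt1).
have [eta [etaM Im_eta eta_neq1 eta_max]] := max_upper_root_exists M_gt1 xi_prim.
have eta_prim := max_upper_root_prim M_gt1 xi_prim etaM Im_eta eta_neq1 eta_max.
have rhoN : rho ^+ N = -1 := rootCK N_gt0 (-1).
have rhoM : rho ^+ M = 1 by rewrite /M mulnC exprM rhoN sqrrN expr1n.
have rho_neq1 : rho != 1.
  by apply: contra_eq_neq rhoN => ->; rewrite expr1n -subr_eq0 opprK -mulr2n pnatr_eq0.
have etaN : eta ^+ N = -1.
  have : (eta ^+ N) ^+ 2 == 1 by rewrite -exprM mulnC etaM.
  rewrite sqrf_eq1 -(prim_order_dvd eta_prim) => /orP[/(dvdn_leq N_gt0)|/eqP //].
  by rewrite leqNgt ltn_Pmull.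
have Re_eq : 'Re rho = 'Re eta.
  apply/le_anti; rewrite eta_max ?Im_rootC_ge0 //=.
  exact: rootC_Re_max N_gt0 etaN Im_eta.
suff -> : rho = eta by [].
apply: eqC_semipolar Re_eq _; last by rewrite mulr_ge0 ?Im_rootC_ge0.
by rewrite (root1_norm (ltnW M_gt1) rhoM) (root1_norm (ltnW M_gt1) etaM).
Qed.

Lemma eC_prim N : (1 < N)%N -> N.-primitive_root (eC N).
Proof.
move=> N_gt1; have := exp_prim_root (rootC_neg1_prim N_gt1) 2.
by rewrite (gcdn_idPl _) ?dvdn_mulr // mulKn.
Qed.

Lemma root1_geometric_sum (R : idomainType) (u : R) (n : nat) : u ^+ n = 1 ->
  \sum_(j < n) u ^+ j = if u == 1 then n%:R else 0.
Proof.
move=> un; have [->|u_neq1] := eqVneq u 1.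
  by rewrite (eq_bigr (fun _ => 1)) ?sumr_const ?card_ord // => j _; rewrite expr1n.
have /eqP : (u - 1) * \sum_(j < n) u ^+ j = 0 by rewrite -subrX1 un subrr.
by rewrite mulf_eq0 subr_eq0 (negPf u_neq1) => /eqP.
Qed.

Lemma prim_root_orthogonality (n : nat) (z : algC) : n.-primitive_root z ->
  forall a b : 'I_n, \sum_(j < n) (z ^+ a * (z ^+ b)^*) ^+ j = if a == b then n%:R else 0.
Proof.
move=> z_prim a b; have n_gt0 := prim_order_gt0 z_prim.
have zkn k : (z ^+ k) ^+ n = 1 by rewrite exprAC (prim_expr_order z_prim) expr1n.
have norm_zk k : `|z ^+ k| = 1 := root1_norm n_gt0 (zkn k).
rewrite root1_geometric_sum; last first.
  by rewrite exprMn -rmorphXn !zkn rmorph1 mulr1.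
congr (if _ then _ else _); apply/eqP/eqP => [ab1|->]; last exact: norm1_mul_conj.
apply/val_inj/eqP; rewrite /= -(modn_small (ltn_ord a)) -(modn_small (ltn_ord b)).
rewrite -(eq_prim_root_expr z_prim); apply/eqP.
by rewrite -[z ^+ a]mulr1 -(norm1_mul_conj (norm_zk b)) [z ^+ b * _]mulrC mulrA ab1 mul1r.
Qed.

Section Kernel.
Variables (p : nat) (om : algC).
Hypothesis om_prim : (p ^ 2).-primitive_root om.

Lemma pow_p_prim : p.-primitive_root (om ^+ p).
Proof.
have p_gt0 : (0 < p)%N by have := prim_order_gt0 om_prim; rewrite expn_gt0 orbF.
have := exp_prim_root om_prim p.
by rewrite (gcdn_idPl _) ?dvdn_exp // -mulnn (mulKn _ p_gt0).
Qed.

Definition kern (x u : 'I_p * 'I_p) : algC :=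
  om ^+ (x.1 * u.1) * (om ^+ p) ^+ (x.1 * u.2 + x.2 * u.1).

(* The symmetry (r,s) <-> (i,j) turns row orthogonality into column
   orthogonality. *)
Lemma kernC x u : kern x u = kern u x.
Proof.
by rewrite /kern [(u.1 * x.1)%N]mulnC [(u.1 * x.2)%N]mulnC [(u.2 * x.1)%N]mulnC addnC.
Qed.

(* K(x,u) K(x',u)^* splits into a factor depending on u.1 only and a pure
   character in u.2, which makes the sum over u.2 a geometric sum. *)
Lemma kern_mul_conj (x x' u : 'I_p * 'I_p) :
  kern x u * (kern x' u)^* =
  om ^+ (x.1 * u.1) * (om ^+ (x'.1 * u.1))^* *
  ((om ^+ p) ^+ x.2 * ((om ^+ p) ^+ x'.2)^*) ^+ u.1 *
  ((om ^+ p) ^+ x.1 * ((om ^+ p) ^+ x'.1)^*) ^+ u.2.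
Proof.
rewrite /kern rmorphM !rmorphXn !exprMn -!exprM !mulnDr !exprD !mulnA.
ring.
Qed.

Lemma kern_orthogonal (x x' : 'I_p * 'I_p) :
  \sum_u kern x u * (kern x' u)^* = if x == x' then (p ^ 2)%:R else 0.
Proof.
case: x x' => [r s] [r' s'] /=.
pose F i j := kern (r, s) (i, j) * (kern (r', s') (i, j))^*.
rewrite (eq_bigr (fun u => F u.1 u.2)) => [|[i j] _] //; rewrite -pair_bigA /F /=.
under eq_bigr => i _ do under eq_bigr => j _ do rewrite kern_mul_conj /=.
under eq_bigr => i _ do rewrite -mulr_sumr (prim_root_orthogonality pow_p_prim).
have [<-|r_neq] := eqVneq r r'; last first.
  by rewrite big1 => [|i _]; rewrite ?mulr0 // xpair_eqE (negPf r_neq).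
have om_k_norm k : `|om ^+ k| = 1.
  apply: (root1_norm (prim_order_gt0 om_prim)).
  by rewrite exprAC (prim_expr_order om_prim) expr1n.
under eq_bigr => i _ do rewrite norm1_mul_conj ?om_k_norm // mul1r.
rewrite -mulr_suml (prim_root_orthogonality pow_p_prim) xpair_eqE eqxx /=.
by case: eqP; rewrite ?mul0r // -natrM mulnn.
Qed.
End Kernel.

(* Z_{p^2} is a genuine ring of size p^2 as soon as p > 1. *)
Lemma sq_gt1 p : (1 < p)%N -> (1 < p ^ 2)%N.
Proof. by move=> p_gt1; rewrite (leq_trans p_gt1) // -mulnn leq_pmulr // ltnW. Qed.

Section Digits.
Variable p : nat.
Hypothesis p_gt1 : (1 < p)%N.

Lemma Zp_lt (a : 'Z_p) : (a < p)%N.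
Proof. by rewrite -{2}(Zp_cast p_gt1) ltn_ord. Qed.

Lemma Zp_nat_inj (j j' : 'I_p) : (j%:R : 'Z_p) = j'%:R -> j = j'.
Proof.
move=> /(congr1 val); rewrite /= !val_Zp_nat // !modn_small //.
exact: val_inj.
Qed.

Let p2_gt1 : (1 < p ^ 2)%N := sq_gt1 p_gt1.

Lemma digits_val (a b : nat) : (a < p)%N -> (b < p)%N ->
  ((a + p * b)%:R : 'Z_(p ^ 2)) = (a + p * b)%N :> nat.
Proof.
move=> a_lt b_lt; rewrite val_Zp_nat // modn_small //.
rewrite -mulnn; apply: leq_trans (_ : p + p * b <= _)%N; first by rewrite ltn_add2r.
by rewrite -mulnS leq_mul2l b_lt orbT.
Qed.

Lemma digits_inj (a b a' b' : nat) : (a < p)%N -> (b < p)%N -> (a' < p)%N -> (b' < p)%N ->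
  ((a + p * b)%:R : 'Z_(p ^ 2)) = (a' + p * b')%:R -> a = a' /\ b = b'.
Proof.
move=> a_lt b_lt a'_lt b'_lt /(congr1 val); rewrite /= !digits_val // => E.
have a_eq : a = a'.
  by move/(congr1 (modn^~ p)): E; rewrite !(mulnC p) !(addnC _ (_ * p)) !modnMDl !modn_small.
split=> //; move: E; rewrite a_eq => /addnI /eqP.
by rewrite eqn_mul2l gtn_eqF ?(ltnW p_gt1) // => /eqP.
Qed.

Lemma digits_addr (i : nat) (a m : 'Z_p) : (i < p)%N ->
  ((i + p * a)%:R : 'Z_(p ^ 2)) + (p * m)%:R = (i + p * (a + m)%R)%:R.
Proof.
move=> i_lt; rewrite -natrD -addnA -mulnDr -[LHS]Zp_nat_mod // -[RHS]Zp_nat_mod //.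
have -> : ((a + m)%R : nat) = ((a + m) %% p)%N.
  by rewrite -[a]natr_Zp -[m]natr_Zp -natrD val_Zp_nat // !natr_Zp.
by rewrite muln_modr mulnn modnDmr.
Qed.
End Digits.

Section Lemma5p5.
Variables (p : nat) (c : 'Z_p) (y z : 'I_p -> 'I_p -> 'Z_p).
Hypothesis p_prime : prime p.
Hypothesis yz_rel : forall i j : 'I_p, y i j + c * z i j = (j : nat)%:R.

Let p_gt1 : (1 < p)%N := prime_gt1 p_prime.
Let om := eC (p ^ 2).

Let om_prim : (p ^ 2).-primitive_root om.
Proof. exact/eC_prim/sq_gt1. Qed.

Definition bel (u : 'I_p * 'I_p) : Gp p :=
  (((u.1 : nat) + p * (y u.1 u.2 : nat))%:R, z u.1 u.2).

Definition lam (x : 'I_p * 'I_p) : Gp p :=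
  (((x.1 : nat) + p * (x.2 : nat))%:R, c * (x.1 : nat)%:R).

Definition Lset : {set Gp p} := [set lam x | x : 'I_p * 'I_p].

Definition tvec (k : 'Z_p) : Gp p := ((p * (- (c * k))%R)%:R, k).

Definition Tset : {set Gp p} := [set tvec k | k : 'Z_p].

(* Distinct indices give distinct points of B: y + c z = j recovers j. *)
Lemma bel_inj : injective bel.
Proof.
move=> [i j] [i' j'] [/digits_inj E z_eq]; case: E; rewrite ?Zp_lt //.
move=> /val_inj i_eq /val_inj y_eq; subst i'; congr (_, _).
by apply: (Zp_nat_inj p_gt1); rewrite -(yz_rel i j) -(yz_rel i j') y_eq z_eq.
Qed.

Lemma lam_inj : injective lam.
Proof.
move=> [r s] [r' s'] [/digits_inj E _]; case: E => //.
by move=> /val_inj -> /val_inj ->.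
Qed.

Lemma BsetE : Bset y z = [set bel u | u : 'I_p * 'I_p].
Proof.
apply/setP => g; apply/imset2P/imsetP => [[i j _ _ ->]|[[i j] _ ->]].
  by exists (i, j).
by exists i j.
Qed.

Lemma sum_Bset (F : Gp p -> algC) :
  \sum_(b in Bset y z) F b = \sum_u F (bel u).
Proof. by rewrite BsetE big_imset //= => u u' _ _ /bel_inj. Qed.

Lemma sum_Lset (F : Gp p -> algC) : \sum_(l in Lset) F l = \sum_x F (lam x).
Proof. by rewrite big_imset //= => x x' _ _ /lam_inj. Qed.

(* The key computation: the characters of Lambda on B form the kernel K, using
   y_ij r + z_ij (c r) = j r (mod p). *)
Lemma chi_lam_bel x u : chi (lam x) (bel u) = kern om x u.
Proof.
case: x u => [r s] [i j]; rewrite /chi /kern /= !digits_val ?Zp_lt // -/om.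
set Y := nat_of_ord (y i j); set Z := nat_of_ord (z i j).
set m := nat_of_ord (c * (r : nat)%:R).
have -> : ((i + p * Y) * (r + p * s) + p * (Z * m) =
    r * i + p * (Y * r + Z * m + s * i) + p ^ 2 * (Y * s))%N.
  by rewrite expnS expn1; nia.
rewrite !exprD [om ^+ (p * _)]exprM [om ^+ (p ^ 2 * _)]exprM.
rewrite (prim_expr_order om_prim) expr1n mulr1; congr (_ * _); apply/eqP.
rewrite -exprD (eq_prim_root_expr (pow_p_prim om_prim)) eqn_modDr.
have /(congr1 val) : ((Y * r + Z * m)%:R : 'Z_p) = (r * j)%:R.
  by rewrite natrD !natrM /Y /Z /m !natr_Zp -(yz_rel i j); ring.
by rewrite /= !val_Zp_nat // => ->.
Qed.

(* Lambda is a spectrum of B: by chi_lam_bel both orthogonality relations of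
   the Fourier criterion reduce to kern_orthogonal. *)
Lemma Bset_spectral : is_spectral (Bset y z).
Proof.
have p2_neq0 : (p ^ 2)%:R != 0 :> algC.
  by rewrite pnatr_eq0 expn_eq0 gtn_eqF // prime_gt0.
have rows : {in Lset &, forall l l',
    \sum_(b in Bset y z) chi l b * (chi l' b)^* = if l == l' then (p ^ 2)%:R else 0}.
  move=> _ _ /imsetP[x _ ->] /imsetP[x' _ ->]; rewrite sum_Bset (inj_eq lam_inj).
  under eq_bigr do rewrite !chi_lam_bel; exact: kern_orthogonal.
have cols : {in Bset y z &, forall b b',
    \sum_(l in Lset) chi l b * (chi l b')^* = if b == b' then (p ^ 2)%:R else 0}.
  rewrite BsetE => _ _ /imsetP[u _ ->] /imsetP[u' _ ->]; rewrite sum_Lset (inj_eq bel_inj).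
  under eq_bigr => x _ do rewrite !chi_lam_bel (kernC _ x u) (kernC _ x u').
  exact: kern_orthogonal.
exists Lset; split.
- by move=> l l' lL l'L l_neq; rewrite rows // (negPf l_neq).
- exact: fourier_independent rows.
- exact: fourier_spanning cols.
Qed.

Lemma bel_add_tvec i j k :
  bel (i, j) + tvec k = (((i : nat) + p * (y i j - c * k)%R)%:R, z i j + k).
Proof. by congr pair; rewrite digits_addr. Qed.

(* b + t determines i, y_ij - c k and z_ij + k, hence j and then k. *)
Lemma Bset_Tset_sum_inj :
  {in setX (Bset y z) Tset &, injective (fun bt => bt.1 + bt.2)}.
Proof.
move=> [b t] [b' t']; rewrite BsetE.
move=> /setXP[/imsetP[[i j] _ ->] /imsetP[k _ ->]].
move=> /setXP[/imsetP[[i' j'] _ ->] /imsetP[k' _ ->]] /=.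
rewrite !bel_add_tvec => /pair_equal_spec[/digits_inj E z_eq].
case: E; rewrite ?(Zp_lt p_gt1) // => /val_inj i_eq /val_inj y_eq; subst i'.
have j_eq : j = j'.
  apply: (Zp_nat_inj p_gt1); rewrite -(yz_rel i j) -(yz_rel i j').
  transitivity ((y i j - c * k) + c * (z i j + k)); first by ring.
  by rewrite y_eq z_eq; ring.
by subst j'; rewrite (addrI _ z_eq).
Qed.

Lemma Bset_Tset_card : (#|Bset y z| * #|Tset| = #|Gp p|)%N.
Proof.
have p2_gt1 := sq_gt1 p_gt1.
rewrite BsetE !card_imset => [|k k' [] //|]; last exact: bel_inj.
by rewrite /Gp !card_prod !card_ord !Zp_cast // -mulnn.
Qed.

Lemma Bset_tile : is_tile (Bset y z).
Proof.
exists Tset; apply: (@tiling_of_injective_sum (Gp p) (fun a b => a + b)).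
  exact: Bset_Tset_sum_inj.
exact: Bset_Tset_card.
Qed.
End Lemma5p5.

Theorem lemma5p5 (p : nat) (pp : prime p) (c : 'Z_p)
  (y z : 'I_p -> 'I_p -> 'Z_p)
  (hyz : forall i j : 'I_p, y i j + c * z i j = (j : nat)%:R) :
  is_tile (Bset y z) /\ is_spectral (Bset y z).
Proof. by split; [apply: Bset_tile pp hyz | apply: Bset_spectral pp hyz]. Qed.
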